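(* Let $V$ be a complex vector space with a quadratic form $f$, and let $V=V_0\supset V_1\supset V_2\supset\cdots$ be a descending chain of subspaces with $\dim_{\mathbb{C}}(V/V_i)<\infty$ for all $i\ge0$ and $\bigcap_{i\ge0}V_i=(0)$. For each $i$, let $Cl(V_i)$ denote the subalgebra of the Clifford algebra $Cl(V,f)$ generated by $1$ and $V_i$ (i.e. $Cl(V_i,f|_{V_i})$). Then $$\bigcap_{i\ge0}Cl(V_i)=\mathbb{C}\cdot1.$$
   Context: A quadratic form on $V$ is a map $f:V\to\mathbb{C}$ with $f(\alpha v)=\alpha^2f(v)$ such that $f(u,v)=f(u+v)-f(u)-f(v)$ is bilinear. The Clifford algebra $Cl(V,f)$ is the unital associative algebra generated by $V$ and $1$ subject to $v^2=f(v)\cdot1$ for $v\in V$. *)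

From HB Require Import structures.
From mathcomp Require Import all_boot all_order all_algebra.
From mathcomp Require Import reals complex.
Set Implicit Arguments. Unset Strict Implicit. Unset Printing Implicit Defensive.
Import Order.TTheory GRing.Theory Num.Theory.
Local Open Scope ring_scope.

Section Clifford.
Variable R : realType.
Local Notation C := (complex R).

Definition polar_form (V : lmodType C) (f : V -> C) (u v : V) : C :=
  f (u + v) - f u - f v.

Definition quadratic_form (V : lmodType C) (f : V -> C) : Prop :=
  (forall (a : C) (v : V), f (a *: v) = a ^+ 2 * f v) /\
  (forall (a : C) (u u' v : V),
      polar_form f (a *: u + u') v = a * polar_form f u v + polar_form f u' v) /\
  (forall (a : C) (u v v' : V),
      polar_form f u (a *: v + v') = a * polar_form f u v + polar_form f u v').

Definition is_clifford_algebra (V : lmodType C) (f : V -> C)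
    (A : algType C) (iota : {linear V -> A}) : Prop :=
  (forall v : V, iota v * iota v = (f v)%:A) /\
  (forall (B : algType C) (j : {linear V -> B}),
     (forall v : V, j v * j v = (f v)%:A) ->
     exists phi : {lrmorphism A -> B},
       (forall v : V, phi (iota v) = j v) /\
       (forall psi : {lrmorphism A -> B},
          (forall v : V, psi (iota v) = j v) -> forall a : A, psi a = phi a)).

Inductive gen_subalg (A : algType C) (S : A -> Prop) : A -> Prop :=
  | gen_in    : forall x, S x -> gen_subalg S x
  | gen_one   : gen_subalg S 1
  | gen_add   : forall x y, gen_subalg S x -> gen_subalg S y -> gen_subalg S (x + y)
  | gen_scale : forall (a : C) x, gen_subalg S x -> gen_subalg S (a *: x)
  | gen_mul   : forall x y, gen_subalg S x -> gen_subalg S y -> gen_subalg S (x * y).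

Definition is_subspace (V : lmodType C) (W : V -> Prop) : Prop :=
  W 0 /\ forall (a : C) (u v : V), W u -> W v -> W (a *: u + v).

Definition finite_codim (V : lmodType C) (W : V -> Prop) : Prop :=
  exists (n : nat) (b : 'I_n -> V),
    forall v : V, exists c : 'I_n -> C, W (v - \sum_(k < n) c k *: b k).

End Clifford.

(* An element x of every Cl(V_i) lies in the subalgebra generated by finitely
   many vectors w_1, ..., w_n, and the finite-dimensional span of these meets
   some V_j trivially.  The generators are then removed one at a time, keeping
   x in Cl(V_j).  A generator w_n lying in span(w_<n) + V_j already lies in
   span(w_<n).  Otherwise, since V_j has finite codimension, some linear form
   lam vanishes on span(w_<n) + V_j with lam(w_n) = 1.  Writing
   x = a + w_n b with a, b generated by w_<n, the universal property yields a
   representation of Cl(V,f) by 2 x 2 matrices over Cl(V,f), modelled on left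
   multiplication on elements a + w_n b, which sends each y of Cl(ker lam) to an
   upper triangular matrix with corner y.  As x, a and b lie in Cl(ker lam),
   the lower-left entries of the images of x and a + w_n b give b = 0.  When no
   generator is left, x is a scalar. *)

From HB Require Import structures.
From mathcomp Require Import all_boot all_order all_algebra.
From mathcomp Require Import boolp reals complex.
From mathcomp Require Import ring.
Set Implicit Arguments. Unset Strict Implicit. Unset Printing Implicit Defensive.
Import Order.TTheory GRing.Theory Num.Theory.
Local Open Scope ring_scope.

Section Subspaces.
Variable R : realType.
Local Notation C := (complex R).
Variable V : lmodType C.
Implicit Types (U W : V -> Prop) (u v w : V) (l : seq V).

Lemma subspace0 U : is_subspace U -> U 0.
Proof. by case. Qed.

Lemma subspaceD U u v : is_subspace U -> U u -> U v -> U (u + v).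
Proof. by case=> _ UP Uu Uv; have := UP 1 u v Uu Uv; rewrite scale1r. Qed.

Lemma subspaceZ U a u : is_subspace U -> U u -> U (a *: u).
Proof. by case=> U0 UP Uu; have := UP a u 0 Uu U0; rewrite addr0. Qed.

Lemma subspaceN U u : is_subspace U -> U u -> U (- u).
Proof. by rewrite -scaleN1r; apply: subspaceZ. Qed.

Lemma subspaceB U u v : is_subspace U -> U u -> U v -> U (u - v).
Proof. by move=> sU Uu Uv; apply: subspaceD => //; apply: subspaceN. Qed.

Fixpoint seq_span l v : Prop :=
  if l is w :: l' then exists c : C, seq_span l' (v - c *: w) else v = 0.

Lemma seq_span_subspace l : is_subspace (seq_span l).
Proof.
elim: l => [|w l [span0 spanP]] /=.
  by split=> // a u v -> ->; rewrite scaler0 addr0.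
split=> [|a u v [c Uc] [d Ud]]; first by exists 0; rewrite scale0r subr0.
exists (a * c + d); have := spanP a _ _ Uc Ud; congr seq_span.
by rewrite scalerDl -scalerA scalerBr opprD addrACA.
Qed.

Lemma seq_span_cons w l v : seq_span l v -> seq_span (w :: l) v.
Proof. by exists 0; rewrite scale0r subr0. Qed.

Lemma seq_span_mem l v : v \in l -> seq_span l v.
Proof.
elim: l => [//|w l IH]; rewrite inE => /predU1P [->|/IH]; last exact: seq_span_cons.
by exists 1; rewrite scale1r subrr; apply: subspace0 (seq_span_subspace l).
Qed.

Definition subspace_add U W v := exists2 u, U u & W (v - u).

Lemma subspace_add_subspace U W :
  is_subspace U -> is_subspace W -> is_subspace (subspace_add U W).
Proof.
move=> sU sW; split=> [|a u v [u1 Uu1 Wu] [v1 Uv1 Wv]].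
  by exists 0; rewrite ?subr0; apply: subspace0.
exists (a *: u1 + v1); first by case: sU => _; apply.
by rewrite opprD addrACA -scalerBr; case: sW => _; apply.
Qed.

Lemma subspace_addl U W u : is_subspace W -> U u -> subspace_add U W u.
Proof. by move=> sW Uu; exists u; rewrite // subrr; apply: subspace0. Qed.

Lemma subspace_addr U W w : is_subspace U -> W w -> subspace_add U W w.
Proof. by move=> sU Ww; exists 0; rewrite ?subr0 //; apply: subspace0. Qed.

Lemma finite_codim_sup U W : (forall v, U v -> W v) -> finite_codim U -> finite_codim W.
Proof. by move=> UW [n [b spans]]; exists n, b => v; have [c /UW] := spans v; exists c. Qed.

End Subspaces.

Section Chains.
Variable R : realType.
Local Notation C := (complex R).
Variable V : lmodType C.
Variable Vs : nat -> V -> Prop.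
Hypothesis Vs_subspace : forall i, is_subspace (Vs i).
Hypothesis Vs_decr : forall i v, Vs i.+1 v -> Vs i v.
Hypothesis Vs_cap0 : forall v, (forall i, Vs i v) -> v = 0.

Lemma chain_le i j v : (i <= j)%N -> Vs j v -> Vs i v.
Proof.
elim: j => [|j IH]; first by rewrite leqn0 => /eqP ->.
by rewrite leq_eqVlt ltnS => /predU1P [-> //|/IH ij /Vs_decr].
Qed.

Lemma seq_span_meet_chain l :
  exists j, forall v, seq_span l v -> Vs j v -> v = 0.
Proof.
elim: l => [|w l [j0 IHl]]; first by exists 0%N => v /= ->.
(* Otherwise normalising the w-coordinate of a nonzero vector of span (w :: l) in V_j
   gives t_j in V_j with t_j - w in span l; two such vectors differ by an element
   of span l meeting V_j0, so they coincide and lie in every V_j. *)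
apply/not_existsP => meets.
have normal j : exists t, [/\ Vs (maxn j j0) t, seq_span l (t - w) & t != 0].
  have /existsNP [v /not_implyP [[c Sv] /not_implyP [Vv /eqP v0]]] := meets (maxn j j0).
  have c0 : c != 0.
    apply: contra_neq v0 => c0; apply: IHl; first by rewrite c0 scale0r subr0 in Sv.
    exact: chain_le (leq_maxr _ _) Vv.
  exists (c^-1 *: v); split.
  - exact: subspaceZ.
  - by rewrite -[w](scalerK c0) -scalerBr; apply: subspaceZ (seq_span_subspace l) _.
  - by rewrite scaler_eq0 invr_eq0 negb_or c0.
have [t0 [Vt0 St0 /eqP]] := normal 0%N; apply; apply: Vs_cap0 => i.
have [t [Vt St _]] := normal i.
suff <- : t = t0 by apply: chain_le (leq_maxl _ _) Vt.
apply/eqP; rewrite -subr_eq0; apply/eqP/IHl.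
  have -> : t - t0 = (t - w) - (t0 - w) by rewrite opprB subrKA.
  exact: subspaceB (seq_span_subspace l) St St0.
exact: subspaceB (Vs_subspace j0) (chain_le (leq_maxr _ _) Vt) (chain_le (leq_maxr _ _) Vt0).
Qed.

End Chains.

Section Functionals.
Variable R : realType.
Local Notation C := (complex R).
Variable V : lmodType C.
Variable U : V -> Prop.
Hypothesis U_subspace : is_subspace U.

Definition spans_mod n (b : 'I_n -> V) :=
  forall v, exists c : 'I_n -> C, U (v - \sum_k c k *: b k).

Definition free_mod n (b : 'I_n -> V) :=
  forall c : 'I_n -> C, U (\sum_k c k *: b k) -> forall k, c k = 0.

Lemma spans_mod_lift n (b : 'I_n.+1 -> V) (c : 'I_n.+1 -> C) k0 :
  spans_mod b -> U (\sum_k c k *: b k) -> c k0 != 0 ->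
  spans_mod (fun k => b (lift k0 k)).
Proof.
move=> spans Uc ck0 v; have [d Ud] := spans v.
pose t := d k0 / c k0.
exists (fun k => d (lift k0 k) - t * c (lift k0 k)).
have -> : \sum_k (d (lift k0 k) - t * c (lift k0 k)) *: b (lift k0 k) =
    \sum_k d k *: b k - t *: \sum_k c k *: b k.
  rewrite scaler_sumr -sumrB (bigD1_ord k0) //= scalerA -scalerBl mulfVK //.
  by rewrite subrr scale0r add0r; apply: eq_bigr => k _; rewrite scalerBl scalerA.
by rewrite opprB addrCA; apply: subspaceD => //; apply: subspaceZ.
Qed.

Lemma spans_mod_free n (b : 'I_n -> V) : spans_mod b ->
  exists m (b' : 'I_m -> V), spans_mod b' /\ free_mod b'.
Proof.
elim: n b => [|n IH] b spans; first by exists 0%N, b; split=> // c _ [].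
have [free|] := pselect (free_mod b); first by exists n.+1, b.
case/existsNP=> c /not_implyP [Uc /existsNP [k0 /eqP ck0]].
exact: IH (spans_mod_lift spans Uc ck0).
Qed.

Lemma free_mod_coord n (b : 'I_n -> V) : spans_mod b -> free_mod b ->
  exists coef : 'I_n -> V -> C, [/\ forall k, scalar (coef k),
    forall k u, U u -> coef k u = 0 & forall v, U (v - \sum_k coef k v *: b k)].
Proof.
move=> spans free; pose coef k v := projT1 (cid (spans v)) k.
have decomp v : U (v - \sum_k coef k v *: b k) := projT2 (cid (spans v)).
have coefU k u : U u -> coef k u = 0.
  by move=> Uu; apply: free; rewrite -[X in U X](subKr u); apply: subspaceB.
exists coef; split=> // k a u v; apply/eqP; rewrite -subr_eq0; apply/eqP.
apply: (free (fun k => coef k (a *: u + v) - (a * coef k u + coef k v))).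
have -> : \sum_k (coef k (a *: u + v) - (a * coef k u + coef k v)) *: b k =
    \sum_k coef k (a *: u + v) *: b k -
    (a *: \sum_k coef k u *: b k + \sum_k coef k v *: b k).
  rewrite scaler_sumr -big_split -sumrB; apply: eq_bigr => i _.
  by rewrite scalerBl scalerDl scalerA.
rewrite (_ : _ - _ = (a *: (u - \sum_k coef k u *: b k) + (v - \sum_k coef k v *: b k))
  - ((a *: u + v) - \sum_k coef k (a *: u + v) *: b k)); last first.
  by rewrite scalerBr opprB [X in _ = X + _]addrACA -opprD [RHS]addrC addrA subrK.
by apply: subspaceB => //; apply: subspaceD => //; apply: subspaceZ.
Qed.

Lemma separating_functional e : finite_codim U -> ~ U e ->
  exists lam : V -> C, [/\ scalar lam, forall u, U u -> lam u = 0 & lam e = 1].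
Proof.
case=> n [b /spans_mod_free [m [b' [spans free]]]] Ue.
have [coef [coefP coefU decomp]] := free_mod_coord spans free.
have [k ek] : exists k, coef k e != 0.
  apply/not_existsP => ek; apply: Ue; rewrite -[e]subr0.
  suff <- : \sum_k coef k e *: b' k = 0 by apply: decomp.
  by apply: big1 => i _; move/negP/negbNE/eqP: (ek i) => ->; rewrite scale0r.
exists (fun v => coef k v / coef k e); split.
- by move=> a u v; rewrite coefP mulrDl mulrA.
- by move=> u /coefU ->; rewrite mul0r.
- by rewrite divff.
Qed.

End Functionals.

Section QuadraticForm.
Variable R : realType.
Local Notation C := (complex R).
Variable V : lmodType C.
Variable f : V -> C.
Hypothesis f_quad : quadratic_form f.

Lemma quadratic_formZ a v : f (a *: v) = a ^+ 2 * f v.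
Proof. by case: f_quad. Qed.

Lemma quadratic_form0 : f 0 = 0.
Proof. by rewrite -(scale0r 0) quadratic_formZ expr0n mul0r. Qed.

Lemma quadratic_formD u v : f (u + v) = f u + f v + polar_form f u v.
Proof. by rewrite /polar_form; ring. Qed.

Lemma polar_formZl a u v : polar_form f (a *: u) v = a * polar_form f u v.
Proof.
case: f_quad => _ [+ _] => /(_ a u 0 v); rewrite addr0 => ->.
by rewrite /polar_form add0r quadratic_form0 subr0 subrr addr0.
Qed.

Lemma polar_formPr u a v w :
  polar_form f u (a *: v + w) = a * polar_form f u v + polar_form f u w.
Proof. by case: f_quad => _ []. Qed.

End QuadraticForm.

Section GeneratedSubalgebra.
Variable R : realType.
Local Notation C := (complex R).
Variable A : algType C.
Implicit Types (S T : A -> Prop) (x y : A).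

Lemma gen_subalg_trans S T x :
  (forall y, S y -> gen_subalg T y) -> gen_subalg S x -> gen_subalg T x.
Proof.
move=> ST; elim=> {x} [x /ST //| |x y _ ? _ ?|a x _ ?|x y _ ? _ ?].
- exact: gen_one.
- exact: gen_add.
- exact: gen_scale.
- exact: gen_mul.
Qed.

Lemma gen_subalg_scalar S (c : C) : gen_subalg S c%:A.
Proof. exact/gen_scale/gen_one. Qed.

Lemma gen_subalg0 S : gen_subalg S 0.
Proof. by rewrite -(scale0r 1); apply: gen_subalg_scalar. Qed.

Lemma gen_subalgN S x : gen_subalg S x -> gen_subalg S (- x).
Proof. by rewrite -scaleN1r; apply: gen_scale. Qed.

Lemma gen_subalg_empty S x :
  (forall y, ~ S y) -> gen_subalg S x -> exists c : C, x = c%:A.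
Proof.
move=> S0; elim=> {x} [x /S0 //| |x y _ [c ->] _ [d ->]|a x _ [c ->]|x y _ [c ->] _ [d ->]].
- by exists 1; rewrite scale1r.
- by exists (c + d); rewrite scalerDl.
- by exists (a * c); rewrite scalerA.
- by exists (c * d); rewrite mulr_algl scalerA.
Qed.

End GeneratedSubalgebra.

Section CliffordSubalgebras.
Variable R : realType.
Local Notation C := (complex R).
Variable V : lmodType C.
Variable A : algType C.
Variable iota : {linear V -> A}.

Definition img (P : V -> Prop) : A -> Prop := fun y => exists2 v, P v & y = iota v.
Local Notation Cl P := (gen_subalg (img P)).

Lemma Cl_sub (P Q : V -> Prop) x : (forall v, P v -> Q v) -> Cl P x -> Cl Q x.
Proof. by move=> PQ; apply: gen_subalg_trans => _ [v /PQ Qv ->]; apply/gen_in; exists v. Qed.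

Lemma Cl_finite (P : V -> Prop) x : Cl P x -> exists l : seq V, Cl (fun v => v \in l) x.
Proof.
have Cl_cat (l1 l2 : seq V) y :
    Cl (fun v => v \in l1) y \/ Cl (fun v => v \in l2) y -> Cl (fun v => v \in l1 ++ l2) y.
  by case; apply: Cl_sub => v; rewrite mem_cat => -> //; rewrite orbT.
elim=> {x} [x [v _ ->]| |x y _ [l1 ?] _ [l2 ?]|a x _ [l ?]|x y _ [l1 ?] _ [l2 ?]].
- by exists [:: v]; apply: gen_in; exists v; rewrite ?inE.
- by exists [::]; apply: gen_one.
- by exists (l1 ++ l2); apply: gen_add; apply: Cl_cat; [left|right].
- by exists l; apply: gen_scale.
- by exists (l1 ++ l2); apply: gen_mul; apply: Cl_cat; [left|right].
Qed.

Lemma Cl_seq_span (l : seq V) v : seq_span l v -> Cl (fun v => v \in l) (iota v).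
Proof.
elim: l v => [|w l IH] v /=; first by move=> ->; rewrite linear0; apply: gen_subalg0.
case=> c /IH Cl_vw; rewrite -(subrK (c *: w) v) linearD; apply: gen_add.
  by apply: Cl_sub Cl_vw => u; rewrite inE orbC => ->.
by rewrite linearZ; apply/gen_scale/gen_in; exists w; rewrite ?inE ?eqxx.
Qed.

Lemma Cl_cons_span (l : seq V) w x : seq_span l w ->
  Cl (fun v => v \in w :: l) x -> Cl (fun v => v \in l) x.
Proof.
move=> Sw; apply: gen_subalg_trans => y [v]; rewrite inE.
by case/predU1P=> [-> ->|lv ->]; [apply: Cl_seq_span|apply: gen_in; exists v].
Qed.

Variable f : V -> C.
Hypothesis iota_sq : forall v, iota v * iota v = (f v)%:A.

Lemma iota_anticomm u w :
  iota u * iota w + iota w * iota u = (polar_form f u w)%:A.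
Proof.
have := iota_sq (u + w); rewrite linearD mulrDl !mulrDr !iota_sq.
rewrite /polar_form !scalerBl => <-.
by rewrite addrAC -!addrA addrC !addrA addrK addrAC addrK.
Qed.

Lemma Cl_mul_iota (P : V -> Prop) e a : Cl P a ->
  exists a1 a2, [/\ Cl P a1, Cl P a2 & a * iota e = a1 + iota e * a2].
Proof.
elim=> {a} [x [w Pw ->]| |x y _ [x1 [x2 [? ? ex]]] _ [y1 [y2 [? ? ey]]]
   |c x _ [x1 [x2 [? ? ex]]]|x y ? [x1 [x2 [? ? ex]]] ? [y1 [y2 [? ? ey]]]].
- exists (polar_form f w e)%:A, (- iota w); split.
  + exact: gen_subalg_scalar.
  + by apply/gen_subalgN/gen_in; exists w.
  + by rewrite -iota_anticomm mulrN addrK.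
- by exists 0, 1; split; rewrite ?mul1r ?mulr1 ?add0r //; [apply: gen_subalg0|apply: gen_one].
- exists (x1 + y1), (x2 + y2); split; [exact: gen_add|exact: gen_add|].
  by rewrite mulrDl ex ey mulrDr addrACA.
- exists (c *: x1), (c *: x2); split; [exact: gen_scale|exact: gen_scale|].
  by rewrite -scalerAl ex -scalerAr scalerDr.
- exists (x * y1 + x1 * y2), (x2 * y2); split; [|exact: gen_mul|].
    by apply: gen_add; apply: gen_mul.
  by rewrite -mulrA ey mulrDr mulrA ex mulrDl -!mulrA addrA.
Qed.

Lemma Cl_adjoin (P Q : V -> Prop) e x : (forall v, Q v -> v = e \/ P v) -> Cl Q x ->
  exists a b, [/\ Cl P a, Cl P b & x = a + iota e * b].
Proof.
move=> QeP; elim=> {x} [x [w /QeP [->|Pw] ->]| |x y _ [x1 [x2 [? ? ->]]] _ [y1 [y2 [? ? ->]]]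
   |c x _ [x1 [x2 [? ? ->]]]|x y _ [a [b [Cla Clb ->]]] _ [a' [b' [? ? ->]]]].
- exists 0, 1; split; rewrite ?mulr1 ?add0r //; [exact: gen_subalg0|exact: gen_one].
- exists (iota w), 0; split; rewrite ?mulr0 ?addr0 //; last exact: gen_subalg0.
  by apply: gen_in; exists w.
- by exists 1, 0; split; rewrite ?mulr0 ?addr0 //; [exact: gen_one|exact: gen_subalg0].
- exists (x1 + y1), (x2 + y2); split; [exact: gen_add|exact: gen_add|].
  by rewrite mulrDr addrACA.
- exists (c *: x1), (c *: x2); split; [exact: gen_scale|exact: gen_scale|].
  by rewrite scalerDr scalerAr.
- have [a1 [a2 [? ? ea]]] := Cl_mul_iota e Cla.
  have [b1 [b2 [? ? eb]]] := Cl_mul_iota e Clb.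
  exists (a * a' + a1 * b' + f e *: (b2 * b')), (a2 * b' + b * a' + b1 * b'); split.
  + by apply: gen_add; [apply: gen_add; apply: gen_mul|apply/gen_scale/gen_mul].
  + by apply: gen_add; [apply: gen_add|]; apply: gen_mul.
  + have e1 : a * (iota e * b') = a1 * b' + iota e * (a2 * b').
      by rewrite mulrA ea mulrDl mulrA.
    have e2 : iota e * b * (iota e * b') = iota e * (b1 * b') + f e *: (b2 * b').
      by rewrite -!mulrA (mulrA b) eb mulrDl mulrDr !mulrA iota_sq mulr_algl -scalerAl.
    rewrite mulrDl !mulrDr e1 e2 -(mulrA _ b a') !addrA.
    by rewrite (ACl (1*2*6*3*4*5))%AC.
Qed.

End CliffordSubalgebras.

Section MatrixAlgebra.
Variable R : realType.
Local Notation C := (complex R).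
Variable A : algType C.

(* 'M[A]_2 with entrywise scaling by C, rather than its canonical A-module structure. *)
Definition M2 := 'M[A]_2.
HB.instance Definition _ := GRing.NzRing.on M2.

Definition M2_scale (a : C) (M : M2) : M2 := map_mx ( *:%R a) M.

Lemma M2_scaleA a b M : M2_scale a (M2_scale b M) = M2_scale (a * b) M.
Proof. by apply/matrixP=> i j; rewrite !mxE scalerA. Qed.
Lemma M2_scale1 : left_id 1 M2_scale.
Proof. by move=> M; apply/matrixP=> i j; rewrite !mxE scale1r. Qed.
Lemma M2_scaleDr : right_distributive M2_scale +%R.
Proof. by move=> a M N; apply/matrixP=> i j; rewrite !mxE scalerDr. Qed.
Lemma M2_scaleDl M : {morph M2_scale^~ M : a b / a + b}.
Proof. by move=> a b; apply/matrixP=> i j; rewrite !mxE scalerDl. Qed.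
HB.instance Definition _ :=
  GRing.Zmodule_isLmodule.Build C M2 M2_scaleA M2_scale1 M2_scaleDr M2_scaleDl.

Lemma M2_scaleAl a (M N : M2) : a *: (M * N) = (a *: M) * N.
Proof.
apply/matrixP=> i j; rewrite !mxE scaler_sumr.
by apply: eq_bigr => k _; rewrite !mxE scalerAl.
Qed.
HB.instance Definition _ := GRing.Lmodule_isLalgebra.Build C M2 M2_scaleAl.

Lemma M2_scaleAr a (M N : M2) : a *: (M * N) = M * (a *: N).
Proof.
apply/matrixP=> i j; rewrite !mxE scaler_sumr.
by apply: eq_bigr => k _; rewrite !mxE scalerAr.
Qed.
HB.instance Definition _ := GRing.Lalgebra_isAlgebra.Build C M2 M2_scaleAr.

Lemma M2_scaleE a (M : M2) i j : (a *: M) i j = a *: M i j.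
Proof. by rewrite mxE. Qed.

Lemma M2_addE (M N : M2) i j : (M + N) i j = M i j + N i j.
Proof. by rewrite mxE. Qed.

Lemma M2_mulE (M N : M2) i j :
  (M * N) i j = M i ord0 * N ord0 j + M i ord_max * N ord_max j.
Proof. by rewrite !mxE big_ord_recl big_ord1; congr (_ + _ * _); congr (_ _ _); exact: val_inj. Qed.

Lemma M2_oneE i j : (1 : M2) i j = (i == j)%:R.
Proof. by rewrite mxE. Qed.

End MatrixAlgebra.

Lemma ord2P (i : 'I_2) : i = ord0 \/ i = ord_max.
Proof. by case: i => [[|[|//]] ?]; [left|right]; apply: val_inj. Qed.

Section CliffordRepresentation.
Variable R : realType.
Local Notation C := (complex R).
Variable V : lmodType C.
Variable A : algType C.
Variable iota : {linear V -> A}.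
Variable f : V -> C.
Variable lam : V -> C.
Variable e : V.
Hypothesis f_quad : quadratic_form f.
Hypothesis lam_scalar : scalar lam.
Hypothesis iota_sq : forall v, iota v * iota v = (f v)%:A.

Definition proj_ker v := v - lam v *: e.
Definition rep_coupling v := polar_form f e (proj_ker v) + lam v * f e.

(* rep_mx v is left multiplication by iota v on pairs (a, b) standing for
   a + iota e * b: with h := proj_ker v, the relation
   iota h * iota e = (polar_form f h e)%:A - iota e * iota h gives
   iota v * (a + iota e * b)
     = (iota h * a + rep_coupling v *: b) + iota e * (lam v *: a - iota h * b). *)
Definition rep_mx v : M2 A := \matrix_(i < 2, j < 2)
  if i == ord0 then (if j == ord0 then iota (proj_ker v) else (rep_coupling v)%:A)
  else (if j == ord0 then (lam v)%:A else - iota (proj_ker v)).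

Lemma proj_kerP a u v : proj_ker (a *: u + v) = a *: proj_ker u + proj_ker v.
Proof. by rewrite /proj_ker lam_scalar scalerDl scalerBr opprD addrACA scalerA. Qed.

Lemma rep_couplingP a u v : rep_coupling (a *: u + v) = a * rep_coupling u + rep_coupling v.
Proof.
by rewrite /rep_coupling proj_kerP lam_scalar polar_formPr // [in RHS]mulrDr addrACA mulrDl mulrA.
Qed.

Lemma rep_mx_linear : linear rep_mx.
Proof.
move=> a u v; apply/matrixP => i j; rewrite !mxE.
case: ifP => _; case: ifP => _.
- by rewrite proj_kerP linearP.
- by rewrite rep_couplingP scalerDl scalerA.
- by rewrite lam_scalar scalerDl scalerA.
- by rewrite proj_kerP linearP opprD scalerN.
Qed.

Definition rep_lin : {linear V -> M2 A} :=
  HB.pack rep_mx (GRing.isLinear.Build C V (M2 A) *:%R rep_mx rep_mx_linear).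

Lemma quadratic_form_proj_ker v : f v = f (proj_ker v) + rep_coupling v * lam v.
Proof.
rewrite {1}(_ : v = lam v *: e + proj_ker v); last by rewrite addrC subrK.
by rewrite quadratic_formD quadratic_formZ // polar_formZl // /rep_coupling; ring.
Qed.

Lemma rep_mx_sq v : rep_mx v * rep_mx v = (f v)%:A.
Proof.
apply/matrixP => i j; rewrite M2_mulE M2_scaleE M2_oneE.
have ord_max0 : (ord_max == ord0 :> 'I_2) = false by [].
case: (ord2P i) => ->; case: (ord2P j) => ->; rewrite !mxE /= ?ord_max0 ?eqxx /=.
- by rewrite iota_sq mulr_algl scalerA -scalerDl -quadratic_form_proj_ker.
- by rewrite mulr_algr mulr_algl scalerN subrr scaler0.
- by rewrite mulr_algr mulr_algl scalerN subrr scaler0.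
- by rewrite mulrNN iota_sq mulr_algl scalerA -scalerDl addrC mulrC -quadratic_form_proj_ker.
Qed.

Local Notation Cl P := (gen_subalg (img iota P)).
Local Notation ker := (fun v => lam v = 0).

Lemma rep_Cl_ker (phi : {lrmorphism A -> M2 A}) y :
  (forall v, phi (iota v) = rep_mx v) -> Cl ker y ->
  phi y ord0 ord0 = y /\ phi y ord_max ord0 = 0.
Proof.
move=> phiE; elim=> {y} [y [v lamv ->]| |y z _ [y0 y1] _ [z0 z1]|c y _ [y0 y1]|y z _ [y0 y1] _ [z0 z1]].
- by rewrite phiE !mxE /= /proj_ker lamv !scale0r subr0.
- by rewrite rmorph1 !M2_oneE.
- by rewrite raddfD !M2_addE y0 y1 z0 z1 addr0.
- by rewrite linearZ /= !M2_scaleE y0 y1 scaler0.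
- by rewrite rmorphM !M2_mulE y0 y1 z0 z1 !(mulr0, mul0r, addr0).
Qed.

Hypothesis iota_universal : is_clifford_algebra f iota.
Hypothesis lam_e : lam e = 1.

Lemma Cl_ker_adjoin_direct x a b : Cl ker x -> Cl ker a -> Cl ker b ->
  x = a + iota e * b -> b = 0.
Proof.
move=> Clx Cla Clb xE.
have [phi [phiE _]] := iota_universal.2 _ rep_lin rep_mx_sq.
have [_ x1] := rep_Cl_ker phiE Clx.
have [_ a1] := rep_Cl_ker phiE Cla.
have [b0 b1] := rep_Cl_ker phiE Clb.
have e1 : phi (iota e) ord_max ord0 = 1 by rewrite phiE !mxE /= lam_e scale1r.
move: x1; rewrite xE rmorphD rmorphM M2_addE M2_mulE a1 b0 b1 e1.
by rewrite add0r mulr0 addr0 mul1r.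
Qed.

End CliffordRepresentation.

Section FiniteMeet.
Variable R : realType.
Local Notation C := (complex R).
Variable V : lmodType C.
Variable A : algType C.
Variable iota : {linear V -> A}.
Variable f : V -> C.
Hypothesis f_quad : quadratic_form f.
Hypothesis iota_universal : is_clifford_algebra f iota.
Variable U : V -> Prop.
Hypothesis U_subspace : is_subspace U.
Hypothesis U_codim : finite_codim U.

Local Notation Cl P := (gen_subalg (img iota P)).

Lemma Cl_meet_seq_span l x : (forall v, seq_span l v -> U v -> v = 0) ->
  Cl U x -> Cl (fun v => v \in l) x -> exists c : C, x = c%:A.
Proof.
elim: l x => [|w l IH] x meet0 ClUx Clx; first by apply: gen_subalg_empty Clx => y [v].
have meet0' v : seq_span l v -> U v -> v = 0 by move=> Sv; apply/meet0/seq_span_cons.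
pose W := subspace_add U (seq_span l).
have W_subspace : is_subspace W := subspace_add_subspace U_subspace (seq_span_subspace l).
have [[u Uu Swu]|Ww] := pselect (W w).
  have u0 : u = 0.
    apply: (meet0 u _ Uu); exists 1; rewrite scale1r -opprB.
    exact: subspaceN (seq_span_subspace l) Swu.
  by rewrite u0 subr0 in Swu; apply: IH meet0' ClUx (Cl_cons_span Swu Clx).
have UW v : U v -> W v := subspace_addl (seq_span_subspace l).
have lW v : v \in l -> W v by move/seq_span_mem/(subspace_addr U_subspace).
have [lam [lam_scalar lamW lam_w]] :=
  separating_functional W_subspace (finite_codim_sup UW U_codim) Ww.
have [a [b [Cla Clb xE]]] : exists a b, [/\ Cl (fun v => v \in l) a, Cl (fun v => v \in l) b
    & x = a + iota w * b].
  by apply: (Cl_adjoin iota_universal.1) Clx => v; rewrite inE => /predU1P.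
have b0 : b = 0.
  apply: (Cl_ker_adjoin_direct f_quad lam_scalar iota_universal.1 iota_universal lam_w
    (Cl_sub _ ClUx) (Cl_sub _ Cla) (Cl_sub _ Clb) xE) => v; [move/UW|move/lW|move/lW]; exact: lamW.
by move: ClUx; rewrite xE b0 mulr0 addr0 => ClUa; apply: IH meet0' ClUa Cla.
Qed.

End FiniteMeet.

Theorem lemma3 (R : realType) (V : lmodType (complex R)) (f : V -> complex R)
    (A : algType (complex R)) (iota : {linear V -> A})
    (Vs : nat -> V -> Prop) :
  quadratic_form f ->
  is_clifford_algebra f iota ->
  (forall i, is_subspace (Vs i)) ->
  (forall v, Vs 0%N v) ->
  (forall i v, Vs i.+1 v -> Vs i v) ->
  (forall i, finite_codim (Vs i)) ->
  (forall v, (forall i, Vs i v) -> v = 0) ->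
  forall x : A,
    (forall i, gen_subalg (fun y => exists2 v, Vs i v & y = iota v) x) <->
    (exists c : complex R, x = c%:A).
Proof.
move=> f_quad iota_universal Vs_subspace _ Vs_decr Vs_codim Vs_cap0 x.
split=> [Clx|[c ->] i]; last exact: gen_subalg_scalar.
have [l Cllx] := Cl_finite (P := Vs 0%N) (Clx 0%N).
have [j meet0] := seq_span_meet_chain Vs_subspace Vs_decr Vs_cap0 l.
exact: (Cl_meet_seq_span f_quad iota_universal (Vs_subspace j) (Vs_codim j) meet0 (Clx j) Cllx).
Qed.
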